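(* Let $Y$ be a regular space, let $X\subseteq Y$ be such that $\psi(X)<\mathfrak b$, and let $(S,\mathcal S)$ be an $\alpha$-scaffold in $X$. Then there exists $S'\le_{\mathcal S}S$ that is closed in $X$.
   Context: $\mathfrak b$ is the least cardinality of an unbounded family in $\omega^\omega$. For a space $Z$ and $z\in Z$, $\psi(Z,z)$ is the least cardinality of a family $\mathcal U$ of open neighbourhoods of $z$ with $\bigcap\mathcal U=\{z\}$, and $\psi(Z)=\sup_{z\in Z}\psi(Z,z)$. Scaffolds in a space $X$ are defined by recursion. A pair $(S,\mathcal S)$ with $S\subseteq X$, $\mathcal S\subseteq 2^S$ is: (S.0) a $0$-scaffold if $S=\{x\}$, $\mathcal S=\{S\}$; then $\mathrm{ht}(S)=\mathrm{ht}_S(x)=0$ and $\mathrm{cor}\,S=x$. (S.1) an $\alpha$-scaffold if there are $x\in S$, pairwise disjoint open sets $U_n\subseteq X$, and $\alpha_n$-scaffolds $(S_n,\mathcal S_n)$ $(n\in\omega)$ with $(\alpha_n)$ nondecreasing, $\alpha=\min\{\beta:\beta>\alpha_n\text{ for all }n\}$, $\mathrm{cor}\,S_n\to x$, $\overline{S_n}\subseteq U_n$, $x\notin\overline{U_n}$, $S=\{x\}\cup\bigcup_nS_n$, $\mathcal S=\{S\}\cup\bigcup_n\mathcal S_n$; then $\mathrm{ht}(S)=\mathrm{ht}_S(x)=\alpha$, $\mathrm{ht}_S(x')=\mathrm{ht}_{S_n}(x')$ for $x'\in S_n$, and $\mathrm{cor}\,S=x$. $\mathcal S$ is a stratification of $S$.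 For $S''\in\mathcal S$ let $\mathcal S|_{S''}=\{T\in\mathcal S:T\subseteq S''\}$; $\mathcal S^-$ is the set of $\subseteq$-maximal elements of $\mathcal S\setminus\{S\}$. Recursively, for $S'\subseteq S$, $S'\le_{\mathcal S}S$ means $\mathrm{cor}\,S'=\mathrm{cor}\,S$ and there is a stratification $\mathcal S'$ of $S'$ such that $\mathcal S'^-\neq\emptyset$ whenever $\mathcal S^-\neq\emptyset$, and each $\beta$-scaffold $B'\in\mathcal S'^-$ satisfies $B'\le_{\mathcal S|_B}B$ for some $\beta$-scaffold $B\in\mathcal S^-$. *)

From mathcomp Require Import all_boot all_order.
From mathcomp Require Import all_classical all_reals all_analysis.
Set Implicit Arguments. Unset Strict Implicit. Unset Printing Implicit Defensive.
Local Open Scope classical_set_scope.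

(* [OZ] denotes 0; [ON f] denotes min{ b : b > f n for all n }
   = sup_n (f n + 1).  Ordinal comparison is computed by [ole]/[olt]. *)
Inductive otree : Type := OZ : otree | ON : (nat -> otree) -> otree.

Fixpoint ole (t u : otree) {struct t} : Prop :=
  match t with
  | OZ => True
  | ON f => forall n, (fix lt (u : otree) : Prop :=
                         match u with
                         | OZ => False
                         | ON g => exists m, ole (f n) (g m)
                         end) u
  end.

Definition olt (t u : otree) : Prop :=
  match u with OZ => False | ON g => exists m, ole t (g m) end.

Definition oeq (t u : otree) : Prop := ole t u /\ ole u t.

Section Rel.
Context {Y : topologicalType}.

Definition open_in (X U : set Y) : Prop :=
  U `<=` X /\ exists V, open V /\ U = X `&` V.

Definition closure_in (X A : set Y) : set Y := X `&` closure A.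

Definition closed_in (X A : set Y) : Prop :=
  A `<=` X /\ A = closure_in X A.

(* [scaffold X S SS a c] : (S, SS) is an a-scaffold in X with cor S = c. *)
Inductive scaffold (X : set Y) : set Y -> set (set Y) -> otree -> Y -> Prop :=
| scaffold0 (x : Y) : X x -> scaffold X [set x] [set [set x]] OZ x
| scaffold1 (x : Y) (U : nat -> set Y) (Sn : nat -> set Y)
    (SSn : nat -> set (set Y)) (an : nat -> otree) (cn : nat -> Y) :
    X x ->
    (forall n, open_in X (U n)) ->
    (forall n m, n <> m -> U n `&` U m = set0) ->
    (forall n, scaffold X (Sn n) (SSn n) (an n) (cn n)) ->
    (forall n, ole (an n) (an n.+1)) ->
    cn @ \oo --> x ->
    (forall n, closure_in X (Sn n) `<=` U n) ->
    (forall n, ~ closure_in X (U n) x) ->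
    scaffold X ([set x] `|` \bigcup_n Sn n)
      ([set [set x] `|` \bigcup_n Sn n] `|` \bigcup_n SSn n) (ON an) x.

Definition restr (SS : set (set Y)) (B : set Y) : set (set Y) :=
  [set T | SS T /\ T `<=` B].

Definition maxel (SS : set (set Y)) (S : set Y) : set (set Y) :=
  [set B | SS B /\ B <> S /\
     forall C, SS C -> C <> S -> B `<=` C -> C = B].

Inductive sle (X : set Y) : set Y -> set Y -> set (set Y) -> Prop :=
| sle_intro (S' S : set Y) (SS : set (set Y)) :
    S' `<=` S ->
    (exists (SS' : set (set Y)) (a' : otree) (c : Y),
        scaffold X S' SS' a' c /\
        (exists a, scaffold X S SS a c) /\
        (maxel SS S !=set0 -> maxel SS' S' !=set0) /\
        (forall B', maxel SS' S' B' ->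
           forall (b : otree) (cB' : Y), scaffold X B' (restr SS' B') b cB' ->
           exists B, maxel SS S B /\
             (exists (b0 : otree) (cB : Y),
                 scaffold X B (restr SS B) b0 cB /\ oeq b b0) /\
             sle X B' B (restr SS B))) ->
    sle X S' S SS.

End Rel.

Definition dom_star (f g : nat -> nat) : Prop :=
  \forall n \near \oo, (f n <= g n)%N.

Definition unbounded (F : set (nat -> nat)) : Prop :=
  ~ exists g, forall f, F f -> dom_star f g.

Definition card_lt_b (T : Type) (K : set T) : Prop :=
  forall F : set (nat -> nat), unbounded F -> ~ (card_le F K).

Definition psi_at_le {Y : topologicalType} (T : Type) (X : set Y) (x : Y)
  (K : set T) : Prop :=
  exists UU : set (set Y),
    (forall U, UU U -> open_in X U /\ U x) /\
    X `&` \bigcap_(U in UU) U = [set x] /\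
    card_le UU K.

Definition psi_lt_b {Y : topologicalType} (X : set Y) : Prop :=
  exists (T : Type) (K : set T), card_lt_b K /\
    forall x, X x -> @psi_at_le Y T X x K.

From mathcomp Require Import all_boot all_order.
From mathcomp Require Import all_classical all_reals all_analysis.
From mathcomp Require Import zify.
Set Implicit Arguments. Unset Strict Implicit. Unset Printing Implicit Defensive.
Local Open Scope classical_set_scope.

(* By induction on the scaffold, build for every h : nat -> nat a closed
   sub-scaffold P h <=_SS S of the same height which shrinks to the core: for
   each open W around the core, P h `<=` W as soon as h dominates some f_W
   pointwise.  At a successor step with core x and strata S_n, P h is x
   together with the pieces P_n (i |-> max (h (n + i)) (g (n + i))) for
   n = k + h 0, k in nat; starting at n = h 0 puts all pieces inside a given
   neighbourhood of x.  psi(X) < b is what makes P h closed: a pseudobase at x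
   of size < b, shrunk by regularity to closed neighbourhoods, yields fewer
   than b functions f_W, all dominated mod finite by a single g, so every
   y <> x has a neighbourhood meeting only finitely many pieces. *)

Lemma ole_refl t : ole t t.
Proof. by elim: t => [//|f IH] /= n; exists n. Qed.

Lemma ole_trans t u v : ole t u -> ole u v -> ole t v.
Proof.
elim: t u v => [//|f IH] [|g]; first by move=> v H; have [] := H 0.
case=> [|h]; first by move=> _ H; have [] := H 0.
move=> Hfg Hgh n; have [m Hm] := Hfg n; have [k Hk] := Hgh m.
by exists k; exact: IH Hm Hk.
Qed.

Lemma oeq_refl a : oeq a a.
Proof. by split; exact: ole_refl. Qed.

Lemma oeq_trans a b c : oeq a b -> oeq b c -> oeq a c.
Proof.
by move=> [ab ba] [bc cb]; split; [exact: ole_trans ab bc|exact: ole_trans cb ba].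
Qed.

Lemma ole_addn (an : nat -> otree) : (forall n, ole (an n) (an n.+1)) ->
  forall n m, ole (an n) (an (n + m)).
Proof.
move=> mono n; elim=> [|m IH]; first by rewrite addn0; exact: ole_refl.
by rewrite addnS; exact: ole_trans IH (mono _).
Qed.

Lemma ole_shift (an tn : nat -> otree) s : (forall n, ole (an n) (an n.+1)) ->
  (forall k, oeq (tn k) (an (k + s))) -> forall k, ole (tn k) (tn k.+1).
Proof.
move=> mono tn_an k; apply: ole_trans (tn_an k).1 _; apply: ole_trans (tn_an k.+1).2.
by rewrite addSn; exact: mono.
Qed.

Lemma oeq_ON_shift (an tn : nat -> otree) s : (forall n, ole (an n) (an n.+1)) ->
  (forall k, oeq (tn k) (an (k + s))) -> oeq (ON tn) (ON an).
Proof.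
move=> mono tn_an; split=> n /=; first by exists (n + s); exact: (tn_an n).1.
by exists n; exact: ole_trans (ole_addn mono n s) (tn_an n).2.
Qed.

Section Topology.
Context {Y : topologicalType}.

Lemma regular_shrink (a : Y) O : regular_space Y -> open O -> O a ->
  exists W, [/\ open W, W a & closure W `<=` O].
Proof.
move=> reg oO Oa; have [A Aa AO] := reg a O (open_nbhs_nbhs (conj oO Oa)).
exists A°; split; [exact: open_interior|exact: Aa|].
exact: subset_trans (closureS (@interior_subset _ _)) AO.
Qed.

Lemma not_closure_nbhs (A : set Y) y : ~ closure A y -> \forall z \near y, ~ A z.
Proof.
move=> nAy; apply: contrapT => nN; apply: nAy => B yB; apply: contrapT => nAB.
by apply: nN; apply: filterS yB => z Bz Az; apply: nAB; exists z.
Qed.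

Lemma pseudobase_avoid (X : set Y) x (UU : set (set Y)) y :
  X `&` \bigcap_(U in UU) U = [set x] -> X y -> y <> x -> exists2 U, UU U & ~ U y.
Proof.
move=> UUx Xy yx; apply: contrapT => allU; apply: yx.
have : (X `&` \bigcap_(U in UU) U) y.
  by split=> // U UUU; apply: contrapT => nUy; apply: allU; exists U.
by rewrite UUx.
Qed.

Lemma psi_lt_b_separates (X : set Y) y z : psi_lt_b X -> X y -> X z -> y <> z ->
  exists Q, [/\ open Q, Q y & ~ Q z].
Proof.
move=> [T [K [_ psiX]]] Xy Xz yz; have [UU [UUo [UUy _]]] := psiX y Xy.
have [U UUU nUz] := pseudobase_avoid UUy Xz (nesym yz).
have [[_ [Q [oQ UE]]] Uy] := UUo U UUU.
move: Uy nUz; rewrite UE => -[_ Qy] nQz.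
by exists Q; split=> // Qz; apply: nQz.
Qed.

Lemma closed_in_set1 (X : set Y) x : psi_lt_b X -> X x -> closed_in X [set x].
Proof.
move=> psiX Xx; split=> [_ -> //|]; apply/seteqP; split=> [_ -> |y [Xy xy]].
  by split=> //; exact: subset_closure.
apply: contrapT => yx; have [Q [oQ Qy nQx]] := psi_lt_b_separates psiX Xy Xx yx.
by have [_ [-> Qx]] := xy Q (open_nbhs_nbhs (conj oQ Qy)).
Qed.

Lemma closed_in_setU1_bigcup (X : set Y) x (A : nat -> set Y) :
  X x -> (forall k, closed_in X (A k)) ->
  (forall y, X y -> y <> x -> exists W, [/\ W x, ~ closure W y &
     exists L, forall k, (L <= k)%N -> A k `<=` W]) ->
  closed_in X ([set x] `|` \bigcup_k A k).
Proof.
move=> Xx Acl sep.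
have AX k : A k `<=` X by have [] := Acl k.
have sX : [set x] `|` \bigcup_k A k `<=` X by move=> y [->|[k _ /AX]].
split=> //; apply/seteqP; split=> [y Py|y [Xy cly]].
  by split; [exact: sX|exact: subset_closure].
apply: contrapT => nPy.
have [W [Wx nWy [L AW]]] := sep y Xy (fun E => nPy (or_introl E)).
have nA (k : 'I_L) : \forall z \near y, ~ A k z.
  apply: not_closure_nbhs => clA; apply: nPy; right; exists k => //.
  by have [_ ->] := Acl k; split.
have [z [Pz [nWz nAz]]] :=
  cly _ (filterI (not_closure_nbhs nWy) (filter_forall _ nA)).
case: Pz => [zx|[k _ Akz]]; first by apply: nWz; rewrite zx.
have [kL|Lk] := ltnP k L; first exact: (nAz (Ordinal kL)).
exact: nWz (AW k Lk z Akz).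
Qed.

End Topology.

Lemma card_lt_b_dominated (T U : Type) (K : set T) (UU : set U) (fv : U -> nat -> nat) :
  card_lt_b K -> card_le UU K -> exists g, forall V, UU V -> dom_star (fv V) g.
Proof.
move=> Kb UUK; apply: contrapT => nb; apply: (Kb (fv @` UU)).
  by move=> [g Hg]; apply: nb; exists g => V UUV; apply: Hg; exists V.
exact: card_le_trans (card_image_le _ _) UUK.
Qed.

Lemma diag_majorant (fn : nat -> nat -> nat) :
  exists f : nat -> nat, forall n i, (fn n i <= f (n + i))%N.
Proof.
exists (fun j => \max_(n < j.+1) \max_(i < j.+1) fn n i) => n i.
have ltn : (n < (n + i).+1)%N by lia.
have lti : (i < (n + i).+1)%N by lia.
apply: leq_trans (leq_bigmax_cond (Ordinal ltn) isT).
exact: (leq_bigmax_cond (Ordinal lti) isT).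
Qed.

Lemma psi_lt_b_dominated_nbhs {Y : topologicalType} (X : set Y) x
    (Q : set Y -> (nat -> nat) -> Prop) :
  regular_space Y -> psi_lt_b X -> X x ->
  (forall W, open W -> W x -> exists f, Q W f) ->
  exists g, forall y, X y -> y <> x -> exists W f,
    [/\ open W, W x, ~ closure W y, dom_star f g & Q W f].
Proof.
move=> reg [T [K [Kb psiX]]] Xx QW; have [UU [UUo [UUx UUK]]] := psiX x Xx.
have fV V : exists f, UU V -> exists W,
    [/\ open W, W x, forall y, X y -> ~ V y -> ~ closure W y & Q W f].
  have [UUV|nUUV] := pselect (UU V); last by exists id.
  have [[_ [G [oG VE]]] Vx] := UUo V UUV.
  have Gx : G x by move: Vx; rewrite VE => -[].
  have [W [oW Wx WG]] := regular_shrink reg oG Gx.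
  have [f Qf] := QW W oW Wx.
  by exists f => _; exists W; split=> // y Xy nVy /WG Gy; apply: nVy; rewrite VE.
have [fv fvP] := choice fV; have [g gP] := card_lt_b_dominated fv Kb UUK.
exists g => y Xy yx; have [V UUV nVy] := pseudobase_avoid UUx Xy yx.
have [W [oW Wx nWy Qf]] := fvP V UUV.
by exists W, (fv V); split=> //; [exact: nWy|exact: gP].
Qed.

Section ScaffoldBasics.
Context {Y : topologicalType} (X : set Y).

Lemma scaffold_sub S SS a c : scaffold X S SS a c -> S `<=` X.
Proof.
by elim=> [x Xx _ -> //|x U Sn SSn an cn Xx _ _ _ IH _ _ _ _ y [->//|[n _ /IH]]].
Qed.

Lemma scaffold_cor S SS a c : scaffold X S SS a c -> S c.
Proof. by case=> [x _|x *]; [|left]. Qed.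

Lemma scaffold_self S SS a c : scaffold X S SS a c -> SS S.
Proof. by case=> [x _|x *]; [|left]. Qed.

Lemma scaffold_strata_sub S SS a c : scaffold X S SS a c -> forall T, SS T -> T `<=` S.
Proof.
elim=> [x _ _ -> //|x U Sn SSn an cn _ _ _ _ IH _ _ _ _ T [->//|[n _ /IH TSn]] y /TSn].
by right; exists n.
Qed.

Lemma scaffold_strata_neq0 S SS a c : scaffold X S SS a c -> forall T, SS T -> T !=set0.
Proof.
elim=> [x _ _ ->|x U Sn SSn an cn _ _ _ _ IH _ _ _ _ T [->|[n _]]]; last exact: IH.
  by exists x.
by exists x; left.
Qed.

Lemma sle_sub S' S SS : sle X S' S SS -> S' `<=` S.
Proof. by case. Qed.

End ScaffoldBasics.

Section SuccessorStrata.
Context {Y : topologicalType} (X : set Y).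
Variables (x : Y) (U Sn : nat -> set Y) (SSn : nat -> set (set Y)).
Variables (an : nat -> otree) (cn : nat -> Y).
Hypotheses (Ud : forall n m, n <> m -> U n `&` U m = set0)
  (Ss : forall n, scaffold X (Sn n) (SSn n) (an n) (cn n))
  (Scl : forall n, closure_in X (Sn n) `<=` U n)
  (xU : forall n, ~ closure_in X (U n) x).

Local Notation S := ([set x] `|` \bigcup_n Sn n).
Local Notation SS := ([set S] `|` \bigcup_n SSn n).

Lemma succ_stratum_sub n : Sn n `<=` U n.
Proof.
move=> y Sny; apply: Scl; split; [exact: scaffold_sub (Ss n) _ Sny|exact: subset_closure].
Qed.

Lemma succ_cor_notin n : ~ Sn n x.
Proof.
move=> Snx; apply: (xU (n := n)); split; first exact: scaffold_sub (Ss n) _ Snx.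
exact/subset_closure/succ_stratum_sub.
Qed.

Lemma succ_stratum_neq n : Sn n <> S.
Proof. by move=> E; apply: (succ_cor_notin (n := n)); rewrite E; left. Qed.

Lemma succ_strata_disj n m y : Sn n y -> Sn m y -> n = m.
Proof.
move=> /succ_stratum_sub Uny /succ_stratum_sub Umy; apply: contrapT => nm.
by have := Ud nm; rewrite -subset0 => /(_ y (conj Uny Umy)).
Qed.

Lemma succ_strata_sub T : SS T -> T <> S -> exists2 n, SSn n T & T `<=` Sn n.
Proof.
by move=> [->//|[n _ SSnT]] _; exists n => //; exact: scaffold_strata_sub (Ss n) _ SSnT.
Qed.

Lemma succ_maxel B : maxel SS S B <-> exists n, B = Sn n.
Proof.
split=> [[SSB [BS Bmax]]|[n ->]].
  have [n SSnB BSn] := succ_strata_sub SSB BS; exists n; apply/esym/Bmax => //.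
    by right; exists n => //; exact: scaffold_self (Ss n).
  exact: succ_stratum_neq.
split; first by right; exists n => //; exact: scaffold_self (Ss n).
split=> [|C SSC CS SnC]; first exact: succ_stratum_neq.
have [k _ CSk] := succ_strata_sub SSC CS; have Sncn := scaffold_cor (Ss n).
have nk := succ_strata_disj Sncn (CSk _ (SnC _ Sncn)); subst k.
by apply/seteqP; split.
Qed.

Lemma succ_restr n : restr SS (Sn n) = SSn n.
Proof.
apply/seteqP; split=> [T [SST TSn]|T SSnT].
  have [TS|nTS] := pselect (T = S).
    by exfalso; apply: (succ_cor_notin (n := n)); apply: TSn; rewrite TS; left.
  have [k SSkT TSk] := succ_strata_sub SST nTS.
  have [y Ty] := scaffold_strata_neq0 (Ss k) SSkT.
  by rewrite (succ_strata_disj (TSn y Ty) (TSk y Ty)).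
by split; [right; exists n|exact: scaffold_strata_sub (Ss n) _ SSnT].
Qed.

Lemma succ_strata_neq_set1 z : SS <> [set [set z]].
Proof.
move=> E; have SSE T : SS T -> T = [set z] by rewrite E.
have SSSn0 : SS (Sn 0) by right; exists 0 => //; exact: scaffold_self (Ss 0).
by apply: (@succ_stratum_neq 0); rewrite (SSE _ SSSn0) (SSE S); last left.
Qed.

End SuccessorStrata.

Lemma scaffold_height_uniq {Y : topologicalType} (X : set Y) S SS a b c d :
  scaffold X S SS a c -> scaffold X S SS b d -> oeq a b.
Proof.
(* The maximal strata and their restrictions are recovered from (S, SS). *)
suff gen S1 SS1 a1 c1 : scaffold X S1 SS1 a1 c1 -> forall S2 SS2 b2 d2,
    scaffold X S2 SS2 b2 d2 -> S1 = S2 -> SS1 = SS2 -> oeq a1 b2.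
  by move=> H1 H2; exact: gen H1 _ _ _ _ H2 erefl erefl.
elim=> [x _|x U Sn SSn an cn _ _ Ud Ss IH _ _ Scl xU] S2 SS2 b2 d2.
  case=> [x' _ _ _|x' U' Sn' SSn' an' cn' _ _ Ud' Ss' _ _ Scl' xU' _ E].
    exact: oeq_refl.
  by case: (succ_strata_neq_set1 Ss' Scl' xU' (esym E)).
case=> [x' _ _ E|x' U' Sn' SSn' an' cn' _ _ Ud' Ss' _ _ Scl' xU' SE SSE].
  by case: (succ_strata_neq_set1 Ss Scl xU E).
have strataE B : (exists n, B = Sn n) <-> (exists m, B = Sn' m).
  by rewrite -(succ_maxel Ud Ss Scl xU) -(succ_maxel Ud' Ss' Scl' xU') SSE SE.
have restrE n m : Sn n = Sn' m -> SSn n = SSn' m.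
  by move=> E; rewrite -(succ_restr Ud Ss Scl xU) -(succ_restr Ud' Ss' Scl' xU') SSE E.
split=> n /=.
  have [m E] := (strataE (Sn n)).1 (ex_intro _ n erefl).
  by exists m; exact: (IH n _ _ _ _ (Ss' m) E (restrE _ _ E)).1.
have [m E] := (strataE (Sn' n)).2 (ex_intro _ n erefl).
by exists m; exact: (IH m _ _ _ _ (Ss' n) (esym E) (restrE _ _ (esym E))).2.
Qed.

Record shrinking_family {Y : topologicalType} (X S : set Y) (SS : set (set Y))
    (a : otree) (c : Y) (P : (nat -> nat) -> set Y)
    (PS : (nat -> nat) -> set (set Y)) (Pa : (nat -> nat) -> otree) : Prop :=
  ShrinkingFamily {
    sf_scaffold : forall h, scaffold X (P h) (PS h) (Pa h) c;
    sf_height : forall h, oeq (Pa h) a;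
    sf_sle : forall h, sle X (P h) S SS;
    sf_closed : forall h, closed_in X (P h);
    sf_small : forall W, open W -> W c ->
      exists f : nat -> nat, forall h, (forall j, (f j <= h j)%N) -> P h `<=` W }.

Lemma shrinking_family_set1 {Y : topologicalType} (X : set Y) x :
  psi_lt_b X -> X x -> shrinking_family X [set x] [set [set x]] OZ x
    (fun=> [set x]) (fun=> [set [set x]]) (fun=> OZ).
Proof.
move=> psiX Xx; split=> [h|h|h|h|W _ Wx]; first exact: scaffold0.
- exact: oeq_refl.
- apply: sle_intro => //; exists [set [set x]], OZ, x.
  split; first exact: scaffold0.
  split; first by exists OZ; exact: scaffold0.
  by split=> [[B [-> []]]|B' [-> []]].
- exact: closed_in_set1.
- by exists (fun=> 0) => h _ y ->.
Qed.

Section Successor.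
Context {Y : topologicalType} (X : set Y).
Variables (x : Y) (U Sn : nat -> set Y) (SSn : nat -> set (set Y)).
Variables (an : nat -> otree) (cn : nat -> Y).
Hypotheses (Xx : X x) (Uo : forall n, open_in X (U n))
  (Ud : forall n m, n <> m -> U n `&` U m = set0)
  (Ss : forall n, scaffold X (Sn n) (SSn n) (an n) (cn n))
  (mono : forall n, ole (an n) (an n.+1)) (cvg : cn @ \oo --> x)
  (Scl : forall n, closure_in X (Sn n) `<=` U n)
  (xU : forall n, ~ closure_in X (U n) x).

Local Notation S := ([set x] `|` \bigcup_n Sn n).
Local Notation SS := ([set S] `|` \bigcup_n SSn n).

Section Shift.
Variables (s : nat) (Tn : nat -> set Y) (TSn : nat -> set (set Y)) (tn : nat -> otree).
Hypotheses (Ts : forall k, scaffold X (Tn k) (TSn k) (tn k) (cn (k + s)))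
  (Tsle : forall k, sle X (Tn k) (Sn (k + s)) (SSn (k + s)))
  (tn_an : forall k, oeq (tn k) (an (k + s)))
  (Tcl : forall k, closed_in X (Tn k)).

Local Notation T := ([set x] `|` \bigcup_k Tn k).
Local Notation TS := ([set T] `|` \bigcup_k TSn k).

Let Ud_shift k k' : k <> k' -> U (k + s) `&` U (k' + s) = set0.
Proof. by move=> kk'; apply: Ud; lia. Qed.

Let Tcl_shift k : closure_in X (Tn k) `<=` U (k + s).
Proof.
have [_ <-] := Tcl k.
exact: subset_trans (sle_sub (Tsle k)) (succ_stratum_sub Ss Scl (n := k + s)).
Qed.

Let xU_shift k : ~ closure_in X (U (k + s)) x.
Proof. exact: xU. Qed.

Lemma succ_shift_scaffold : scaffold X T TS (ON tn) x.
Proof.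
apply: scaffold1 Xx (fun k => Uo (k + s)) Ud_shift Ts (ole_shift mono tn_an) _
  Tcl_shift xU_shift.
exact: cvg_comp (cvg_addnr s) cvg.
Qed.

Lemma succ_shift_sle : sle X T S SS.
Proof.
apply: sle_intro => [y [->|[k _ /(sle_sub (Tsle k)) Sy]]|]; first by left.
  by right; exists (k + s).
exists TS, (ON tn), x; split; first exact: succ_shift_scaffold.
split; first by exists (ON an); exact: scaffold1 Xx Uo Ud Ss mono cvg Scl xU.
have maxelT B' : maxel TS T B' <-> exists k, B' = Tn k.
  exact: succ_maxel Ud_shift Ts Tcl_shift xU_shift B'.
split=> [_|B' /maxelT [k ->] b cB']; first by exists (Tn 0); apply/maxelT; exists 0.
rewrite (succ_restr Ud_shift Ts Tcl_shift xU_shift) => Tsb.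
exists (Sn (k + s)); split; first by apply/(succ_maxel Ud Ss Scl xU); exists (k + s).
rewrite (succ_restr Ud Ss Scl xU); split; last exact: Tsle.
exists (an (k + s)), (cn (k + s)); split; first exact: Ss.
exact: oeq_trans (scaffold_height_uniq Tsb (Ts k)) (tn_an k).
Qed.

End Shift.

Section Families.
Variables (Pn : nat -> (nat -> nat) -> set Y) (PSn : nat -> (nat -> nat) -> set (set Y)).
Variable Pan : nat -> (nat -> nat) -> otree.
Hypothesis HP : forall n,
  shrinking_family X (Sn n) (SSn n) (an n) (cn n) (Pn n) (PSn n) (Pan n).

Let uniformly_small W (f : nat -> nat) := forall n h,
  W (cn n) -> (forall i, (f (n + i) <= h i)%N) -> Pn n h `<=` W.

Lemma uniformly_small_exists W : open W -> exists f, uniformly_small W f.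
Proof.
move=> oW.
have fnE n : exists fn : nat -> nat,
    W (cn n) -> forall h, (forall i, (fn i <= h i)%N) -> Pn n h `<=` W.
  have [Wcn|nWcn] := pselect (W (cn n)); last by exists id.
  by have [f fP] := sf_small (HP n) oW Wcn; exists f.
have [fn fnP] := choice fnE; have [f fP] := diag_majorant fn.
by exists f => n h Wcn hf; apply: fnP => // i; exact: leq_trans (fP n i) (hf i).
Qed.

Section Glue.
Variable g : nat -> nat.
Hypothesis g_sep : forall y, X y -> y <> x -> exists W f,
  [/\ open W, W x, ~ closure W y, dom_star f g & uniformly_small W f].

Let arg (h : nat -> nat) n i := maxn (h (n + i)) (g (n + i)).
Let piece h k := Pn (k + h 0) (arg h (k + h 0)).
Let glued h := [set x] `|` \bigcup_k piece h k.

Lemma glued_closed h : closed_in X (glued h).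
Proof.
apply: closed_in_setU1_bigcup => // [k|y Xy yx]; first exact: sf_closed.
have [W [f [oW Wx nWy [N _ fg] Wsmall]]] := g_sep Xy yx.
have [M _ cnW] := cvg (open_nbhs_nbhs (conj oW Wx)).
exists W; split=> //; exists (maxn N M) => k kNM; apply: Wsmall.
  by apply: cnW => /=; lia.
move=> i; apply: leq_trans (fg _ _) _; rewrite /arg /=; lia.
Qed.

Lemma glued_small W : open W -> W x ->
  exists f : nat -> nat, forall h, (forall j, (f j <= h j)%N) -> glued h `<=` W.
Proof.
move=> oW Wx; have [M _ cnW] := cvg (open_nbhs_nbhs (conj oW Wx)).
have [f Wsmall] := uniformly_small_exists oW.
exists (fun j => maxn M (f j)) => h hf y [->//|[k _]]; apply: Wsmall.
  by apply: cnW => /=; have := hf 0; lia.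
by move=> i; have := hf (k + h 0 + i); rewrite /arg; lia.
Qed.

Lemma shrinking_family_glued : shrinking_family X S SS (ON an) x glued
  (fun h => [set glued h] `|` \bigcup_k PSn (k + h 0) (arg h (k + h 0)))
  (fun h => ON (fun k => Pan (k + h 0) (arg h (k + h 0)))).
Proof.
have Ts h k := sf_scaffold (HP (k + h 0)) (arg h (k + h 0)).
have Tsle h k := sf_sle (HP (k + h 0)) (arg h (k + h 0)).
have Tan h k := sf_height (HP (k + h 0)) (arg h (k + h 0)).
have Tcl h k := sf_closed (HP (k + h 0)) (arg h (k + h 0)).
split=> [h|h|h|h|]; [exact: succ_shift_scaffold (Ts h) (Tsle h) (Tan h) (Tcl h)
  |exact: oeq_ON_shift mono (Tan h)
  |exact: succ_shift_sle (Ts h) (Tsle h) (Tan h) (Tcl h)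
  |exact: glued_closed|exact: glued_small].
Qed.

End Glue.

Lemma shrinking_family_succ : regular_space Y -> psi_lt_b X ->
  exists P PS Pa, shrinking_family X S SS (ON an) x P PS Pa.
Proof.
move=> reg psiX.
have [g g_sep] :=
  psi_lt_b_dominated_nbhs reg psiX Xx (fun W oW _ => uniformly_small_exists oW).
by do 3 eexists; exact: shrinking_family_glued g_sep.
Qed.

End Families.
End Successor.

Lemma scaffold_shrinking_family {Y : topologicalType} (X S : set Y) SS a c :
  regular_space Y -> psi_lt_b X -> scaffold X S SS a c ->
  exists P PS Pa, shrinking_family X S SS a c P PS Pa.
Proof.
move=> reg psiX; elim=> [x Xx|x U Sn SSn an cn Xx Uo Ud Ss IH mono cvg Scl xU].
  by do 3 eexists; exact: shrinking_family_set1.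
have /choice [F FP] : forall n, exists t : _ * _ * _,
    shrinking_family X (Sn n) (SSn n) (an n) (cn n) t.1.1 t.1.2 t.2.
  by move=> n; have [P [PS [Pa sfP]]] := IH n; exists (P, PS, Pa).
exact: (shrinking_family_succ Xx Uo Ud Ss mono cvg Scl xU (Pn := fun n => (F n).1.1)
  (PSn := fun n => (F n).1.2) (Pan := fun n => (F n).2) FP reg psiX).
Qed.

Theorem corollary2 (Y : topologicalType) (X : set Y) (S : set Y)
  (SS : set (set Y)) (alpha : otree) (c : Y) :
  @regular_space Y -> psi_lt_b X -> scaffold X S SS alpha c ->
  exists S' : set Y, sle X S' S SS /\ closed_in X S'.
Proof.
move=> reg psiX Ss; have [P [PS [Pa sfP]]] := scaffold_shrinking_family reg psiX Ss.
by exists (P (fun=> 0)); split; [exact: sf_sle sfP _|exact: sf_closed sfP _].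
Qed.
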